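(* Let $f:\mathbb{R}^n\to\mathbb{R}$ be differentiable, let $g:\mathbb{R}^n\to\mathbb{R}\cup\{+\infty\}$ be proper and convex, $F=f+g$, $F^*=\inf F>-\infty$. For $L>0$ and $p\in\{1,2\}$ and $x\in\mathrm{dom}\,g$ set \[ \mathcal{D}_p(x,L)=-2L\min_{y}\Big\{\nabla f(x)^\top(y-x)+\tfrac{L}{2}\|y-x\|_p^2+g(y)-g(x)\Big\}. \] Let $L_1,L_2>0$ satisfy $L_2/n\le L_1\le L_2$. (i) If $\mu_2>0$ satisfies $\frac12\mathcal{D}_2(x,L_2)\ge\mu_2(F(x)-F^* )$ for all $x\in\mathrm{dom}\,g$, then $\frac12\mathcal{D}_1(x,L_1)\ge\frac{\mu_2}{n}(F(x)-F^* )$ for all $x\in\mathrm{dom}\,g$. (ii) If $\mu_1>0$ satisfies $\frac12\mathcal{D}_1(x,L_1)\ge\mu_1(F(x)-F^* )$ for all $x\in\mathrm{dom}\,g$, then $\frac12\mathcal{D}_2(x,L_2)\ge\mu_1(F(x)-F^* )$ for all $x\in\mathrm{dom}\,g$. Thus the best proximal-PL constants satisfy $\mu_2/n\le\mu_1\le\mu_2$.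
   Context: The inequality $\frac12\mathcal{D}_p(x,L)\ge\mu(F(x)-F^* )$ for all feasible $x$ is the proximal-PL condition in the $p$-norm with constants $L,\mu$; constraints (such as $\sum_m x_m=\gamma$ or bounds) are encoded in $g$ as an indicator function. *)

From HB Require Import structures.
From mathcomp Require Import all_boot all_order all_algebra.
From mathcomp Require Import all_classical all_reals all_analysis.
Set Implicit Arguments. Unset Strict Implicit. Unset Printing Implicit Defensive.
Import Order.TTheory GRing.Theory Num.Theory.
Import numFieldNormedType.Exports.
Local Open Scope classical_set_scope.
Local Open Scope ring_scope.

Section Defs.
Variables (R : realType) (n : nat).

Definition norm1 (v : 'rV[R]_n) : R := \sum_(i < n) `|v ord0 i|.
Definition norm2 (v : 'rV[R]_n) : R := Num.sqrt (\sum_(i < n) (v ord0 i) ^+ 2).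

Definition dom (g : 'rV[R]_n -> \bar R) : set 'rV[R]_n :=
  [set x | (g x < +oo)%E].

Definition proper_fun (g : 'rV[R]_n -> \bar R) : Prop :=
  (forall x, g x != -oo%E) /\ (exists x, (g x < +oo)%E).

(* convexity of an extended-real valued function (convention 0 * (+oo) = 0) *)
Definition convex_fun (g : 'rV[R]_n -> \bar R) : Prop :=
  forall (x y : 'rV[R]_n) (t : R), 0 <= t <= 1 ->
    (g ((1 - t) *: x + t *: y)%R <= (1 - t)%:E * g x + t%:E * g y)%E.

(* objective of the proximal subproblem, nrm = ||.||_p :
   grad f(x)^T (y - x) + L/2 ||y-x||_p^2 + g(y) - g(x),
   where grad f(x)^T h is the differential 'd f x h *)
Definition prox_obj (f : 'rV[R]_n -> R) (g : 'rV[R]_n -> \bar R)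
  (nrm : 'rV[R]_n -> R) (L : R) (x y : 'rV[R]_n) : \bar R :=
  (('d f x (y - x) + L / 2 * nrm (y - x) ^+ 2)%:E + g y - g x)%E.

(* D_p(x, L) = -2L min_y { ... }  (the min is taken as an infimum) *)
Definition Dp (f : 'rV[R]_n -> R) (g : 'rV[R]_n -> \bar R)
  (nrm : 'rV[R]_n -> R) (x : 'rV[R]_n) (L : R) : \bar R :=
  ((- (2 * L))%:E * ereal_inf (range (prox_obj f g nrm L x)))%E.

Definition D1 f g x L := Dp f g norm1 x L.
Definition D2 f g x L := Dp f g norm2 x L.

End Defs.

From HB Require Import structures.
From mathcomp Require Import all_boot all_order all_algebra.
From mathcomp Require Import all_classical all_reals all_analysis.
From mathcomp Require Import ring lra.
Import Order.TTheory GRing.Theory Num.Theory.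
Import numFieldNormedType.Exports.
Local Open Scope classical_set_scope.
Local Open Scope ring_scope.

(* The proof rests on three facts about D_p:
   - D_p(x, L) >= 0, because the choice y = x gives the value 0;
   - comparison of norms: if L1 ||h||^2 <= L2 ||h||'^2 for every h, then
     the subproblem objectives are pointwise ordered, whence
     (L1 / L2) D'(x, L2) <= D(x, L1);
   - monotonicity in L: by convexity of g, moving from x only a fraction
     t = L / L' of the way towards y turns the L-subproblem at y into the
     L'-subproblem at the new point, which gives D(x, L) <= D(x, L').
   Together with ||h||_2^2 <= ||h||_1^2 <= n ||h||_2^2 this yields
   (ii): D_2(x, L2) >= D_2(x, L1) >= D_1(x, L1), and
   (i):  D_1(x, L1) >= D_1(x, L2 / n) >= D_2(x, L2) / n. *)

Section SumSquares.
Variable R : realFieldType.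

Lemma sum_sqr_le_sqr_sum m (a : 'I_m -> R) : (forall i, 0 <= a i) ->
  \sum_(i < m) a i ^+ 2 <= (\sum_(i < m) a i) ^+ 2.
Proof.
move=> a_ge0; rewrite [X in _ <= X]expr2 mulr_suml; apply: ler_sum => i _.
rewrite expr2 ler_wpM2l // (bigD1 i) //= lerDl.
by apply: sumr_ge0 => j _.
Qed.

Lemma sum_sqr_dev m (a : 'I_m -> R) (b : R) :
  \sum_(i < m) (a i - b) ^+ 2 =
  \sum_(i < m) a i ^+ 2 - 2 * b * \sum_(i < m) a i + m%:R * b ^+ 2.
Proof.
under eq_bigr => i _ do rewrite sqrrB.
rewrite big_split /= sumrB mulr_sumr sumr_const card_ord.
congr (_ - _ + _); last by rewrite mulr_natl.
by apply: eq_bigr => i _; rewrite mulr2n; ring.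
Qed.

(* Cauchy-Schwarz against the all-ones vector: the squared deviations from
   the mean are nonnegative. *)
Lemma sqr_sum_le m (a : 'I_m -> R) :
  (\sum_(i < m) a i) ^+ 2 <= m%:R * \sum_(i < m) a i ^+ 2.
Proof.
case: m a => [|m] a; first by rewrite !big_ord0 expr0n mul0r.
set S := \sum_(i < _) a i; set Q := \sum_(i < _) a i ^+ 2.
have m_gt0 : 0 < m.+1%:R :> R by rewrite ltr0n.
have : 0 <= \sum_(i < m.+1) (a i - S / m.+1%:R) ^+ 2.
  by apply: sumr_ge0 => i _; apply: sqr_ge0.
rewrite sum_sqr_dev -/S -/Q.
have -> : Q - 2 * (S / m.+1%:R) * S + m.+1%:R * (S / m.+1%:R) ^+ 2
          = (m.+1%:R * Q - S ^+ 2) / m.+1%:R.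
  by field; rewrite gt_eqF.
by rewrite pmulr_lge0 ?invr_gt0 // subr_ge0.
Qed.

End SumSquares.

(* The only property of the norms used in the subproblem: homogeneity with
   respect to nonnegative scalars. *)
Definition pos_homogeneous {R : realType} {n : nat} (nrm : 'rV[R]_n -> R) : Prop :=
  forall (a : R) (v : 'rV[R]_n), 0 <= a -> nrm (a *: v) = a * nrm v.

Section Norms.
Variables (R : realType) (n : nat).

Lemma norm2_sqr (v : 'rV[R]_n) : norm2 v ^+ 2 = \sum_(i < n) `|v ord0 i| ^+ 2.
Proof.
rewrite sqr_sqrtr; last by apply: sumr_ge0 => i _; apply: sqr_ge0.
by apply: eq_bigr => i _; rewrite real_normK // num_real.
Qed.

Lemma norm2_sqr_le_norm1_sqr (v : 'rV[R]_n) : norm2 v ^+ 2 <= norm1 v ^+ 2.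
Proof. by rewrite norm2_sqr; apply: sum_sqr_le_sqr_sum. Qed.

Lemma norm1_sqr_le_dim_norm2_sqr (v : 'rV[R]_n) : norm1 v ^+ 2 <= n%:R * norm2 v ^+ 2.
Proof. by rewrite norm2_sqr; apply: sqr_sum_le. Qed.

Lemma norm1_pos_homogeneous : pos_homogeneous (@norm1 R n).
Proof.
move=> a v a_ge0; rewrite /norm1 mulr_sumr; apply: eq_bigr => i _.
by rewrite mxE normrM ger0_norm.
Qed.

Lemma norm2_pos_homogeneous : pos_homogeneous (@norm2 R n).
Proof.
move=> a v a_ge0; rewrite /norm2.
under eq_bigr => i _ do rewrite mxE exprMn.
by rewrite -mulr_sumr sqrtrM ?sqr_ge0 // sqrtr_sqr ger0_norm.
Qed.

End Norms.

Section ProximalGap.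
Context {R : realType} {n : nat} {f : 'rV[R]_n -> R} {g : 'rV[R]_n -> \bar R}.
Context {x : 'rV[R]_n} {gx : R}.
Hypothesis gxE : g x = gx%:E.
Set Implicit Arguments. Unset Strict Implicit.

Definition prox_inf (nrm : 'rV[R]_n -> R) (L : R) : \bar R :=
  ereal_inf (range (prox_obj f g nrm L x)).

Lemma DpE (nrm : 'rV[R]_n -> R) (L : R) :
  Dp f g nrm x L = ((- (2 * L))%:E * prox_inf nrm L)%E.
Proof. by []. Qed.

(* y = x is feasible with value 0, hence I_p(x, L) <= 0 and D_p(x, L) >= 0. *)
Lemma Dp_ge0 (nrm : 'rV[R]_n -> R) (L : R) :
  pos_homogeneous nrm -> 0 <= L -> (0 <= Dp f g nrm x L)%E.
Proof.
move=> hom L_ge0; rewrite DpE; apply: mule_le0.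
  by rewrite lee_fin oppr_le0 mulr_ge0.
apply: le_trans (ereal_inf_lbound _) _; first by exists x.
have nrm0 : nrm 0 = 0 by rewrite -(scale0r 0) hom // mul0r.
by rewrite /prox_obj subrr linear0 nrm0 expr0n /= mulr0 addr0 gxE add0e subee.
Qed.

Lemma Dp_norm_cmp (n1 n2 : 'rV[R]_n -> R) (L1 L2 : R) : 0 <= L1 -> 0 < L2 ->
  (forall h, L1 * n1 h ^+ 2 <= L2 * n2 h ^+ 2) ->
  ((L1 / L2)%:E * Dp f g n2 x L2 <= Dp f g n1 x L1)%E.
Proof.
move=> L1_ge0 L2_gt0 quad_le.
have inf_le : (prox_inf n1 L1 <= prox_inf n2 L2)%E.
  apply: le_ereal_inf_tmp => _ [y _ <-].
  apply: le_trans (ereal_inf_lbound _) _; first by exists y.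
  rewrite /prox_obj; do 2 apply: leeD2r; rewrite lee_fin lerD2l.
  by rewrite mulrAC [X in _ <= X]mulrAC ler_wpM2r ?invr_ge0.
rewrite !DpE muleA -EFinM.
have -> : L1 / L2 * - (2 * L2) = - (2 * L1) by field; rewrite gt_eqF.
by rewrite !EFinN !mulNe leeN2 lee_wpmul2l // lee_fin mulr_ge0.
Qed.

Lemma prox_obj_convex_comb (nrm : 'rV[R]_n -> R) (L t : R) (y : 'rV[R]_n) :
  pos_homogeneous nrm -> convex_fun g -> (forall z, g z != -oo%E) -> 0 < t <= 1 ->
  (prox_obj f g nrm L x ((1 - t) *: x + t *: y)
     <= t%:E * prox_obj f g nrm (t * L) x y)%E.
Proof.
move=> hom g_cvx g_noo /andP[t_gt0 t_le1].
have shift : (1 - t) *: x + t *: y - x = t *: (y - x).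
  by rewrite scalerBl scale1r scalerBr addrAC [x - _]addrC addrK addrC.
rewrite /prox_obj shift linearZ /= hom ?(ltW t_gt0) // gxE.
case gyE: (g y) => [gy| |]; last by move: (g_noo y); rewrite gyE.
  have := g_cvx x y t; rewrite (ltW t_gt0) t_le1 gxE gyE => /(_ isT).
  case: (g _) (g_noo ((1 - t) *: x + t *: y)) => [gt| |] // _.
  rewrite -!EFinM -!EFinD !lee_fin -[t *: _]/(t * 'd f x (y - x)) => convex_ineq.
  move: ('d f x (y - x) : R) (nrm (y - x)) => d u.
  have -> : t * (d + t * L / 2 * u ^+ 2 + gy - gx)
          = t * d + L / 2 * (t * u) ^+ 2 + (t * gy - t * gx) by ring.
  lra.
by rewrite addeAC -EFinB addeC gt0_muley ?leey.
Qed.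

(* Monotonicity of the subproblem value in L, rescaled: for 0 < L <= L',
   (L' / L) I_p(x, L') <= I_p(x, L).  Use the convex combination with
   t = L / L' in the L'-subproblem. *)
Lemma prox_inf_scale (nrm : 'rV[R]_n -> R) (L L' : R) :
  pos_homogeneous nrm -> convex_fun g -> (forall z, g z != -oo%E) ->
  0 < L -> L <= L' -> ((L' / L)%:E * prox_inf nrm L' <= prox_inf nrm L)%E.
Proof.
move=> hom g_cvx g_noo L_gt0 LL'.
have L'_gt0 : 0 < L' by apply: lt_le_trans LL'.
set t := L / L'.
have t_range : 0 < t <= 1 by rewrite divr_gt0 //= ler_pdivrMr // mul1r.
have tL' : t * L' = L by rewrite /t mulfVK // gt_eqF.
have tK : L' / L * t = 1 by rewrite /t mulrA mulfVK ?divff // gt_eqF.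
apply: le_ereal_inf_tmp => _ [y _ <-].
apply: le_trans (_ : (L' / L)%:E * (t%:E * prox_obj f g nrm L x y) <= _)%E.
  apply: lee_wpmul2l; first by rewrite lee_fin divr_ge0 // ltW.
  apply: le_trans (ereal_inf_lbound _) _; first by exists ((1 - t) *: x + t *: y).
  by rewrite -[in X in (_ <= X)%E]tL'; apply: prox_obj_convex_comb.
by rewrite muleA -EFinM tK mul1e.
Qed.

Lemma Dp_mono (nrm : 'rV[R]_n -> R) (L L' : R) :
  pos_homogeneous nrm -> convex_fun g -> (forall z, g z != -oo%E) ->
  0 <= L -> L <= L' -> (Dp f g nrm x L <= Dp f g nrm x L')%E.
Proof.
move=> hom g_cvx g_noo; rewrite le0r => /predU1P[-> L'_ge0|L_gt0 LL'].
  by rewrite DpE mulr0 oppr0 mul0e Dp_ge0.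
rewrite !DpE !EFinN !mulNe leeN2.
have -> : 2 * L' = 2 * L * (L' / L) by rewrite -mulrA [L * _]mulrC mulfVK ?gt_eqF.
rewrite EFinM -muleA; apply: lee_wpmul2l; first by rewrite lee_fin mulr_ge0 // ltW.
exact: prox_inf_scale.
Qed.

End ProximalGap.

Section NormComparison.
Context {R : realType} {n : nat} {f : 'rV[R]_n -> R} {g : 'rV[R]_n -> \bar R}.
Context {x : 'rV[R]_n}.

(* ||h||_2 <= ||h||_1 gives D_1(x, L) <= D_2(x, L). *)
Lemma D1_le_D2 (L : R) : 0 < L -> (D1 f g x L <= D2 f g x L)%E.
Proof.
move=> L_gt0; rewrite -[D1 f g x L]mul1e -(divff (lt0r_neq0 L_gt0)).
apply: Dp_norm_cmp => // [|h]; first exact: ltW.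
by apply: ler_wpM2l; [exact: ltW | exact: norm2_sqr_le_norm1_sqr].
Qed.

(* ||h||_1^2 <= n ||h||_2^2 gives D_2(x, L) / n <= D_1(x, L / n); for n = 0
   both sides vanish, with the convention 0^-1 = 0. *)
Lemma D2_le_D1 (L : R) : 0 < L ->
  ((n%:R^-1)%:E * D2 f g x L <= D1 f g x (L / n%:R))%E.
Proof.
move=> L_gt0; have nE : n%:R^-1 = L / n%:R / L by rewrite mulrAC divff ?mul1r ?gt_eqF.
rewrite [X in (X%:E * _)%E]nE.
apply: Dp_norm_cmp => // [|h]; first by rewrite divr_ge0 // ltW.
have n_inv_le1 : n%:R^-1 * n%:R <= 1 :> R.
  by have [->|n_neq0] := eqVneq n 0%N; rewrite ?invr0 ?mul0r // mulVf ?pnatr_eq0.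
apply: le_trans (_ : L / n%:R * (n%:R * norm2 h ^+ 2) <= _).
  by apply: ler_wpM2l; [rewrite divr_ge0 // ltW | exact: norm1_sqr_le_dim_norm2_sqr].
rewrite -!mulrA (mulrA n%:R^-1) mulrA.
by apply: ler_wpM2r; [exact: sqr_ge0 | exact: ler_piMr (ltW L_gt0) n_inv_le1].
Qed.

End NormComparison.

Theorem lemmaC1 (R : realType) (n : nat)
  (f : 'rV[R]_n -> R) (g : 'rV[R]_n -> \bar R) (Fstar L1 L2 : R) :
  (forall x, differentiable f x) ->
  proper_fun g -> convex_fun g ->
  ereal_inf (range (fun x => ((f x)%:E + g x)%E)) = Fstar%:E ->
  0 < L1 -> 0 < L2 -> L2 / n%:R <= L1 -> L1 <= L2 ->
  (forall mu2 : R, 0 < mu2 ->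
     (forall x, dom g x ->
        ((mu2%:E * ((f x)%:E + g x - Fstar%:E)) <= (2^-1)%:E * D2 f g x L2)%E) ->
     (forall x, dom g x ->
        (((mu2 / n%:R)%:E * ((f x)%:E + g x - Fstar%:E)) <= (2^-1)%:E * D1 f g x L1)%E))
  /\
  (forall mu1 : R, 0 < mu1 ->
     (forall x, dom g x ->
        ((mu1%:E * ((f x)%:E + g x - Fstar%:E)) <= (2^-1)%:E * D1 f g x L1)%E) ->
     (forall x, dom g x ->
        ((mu1%:E * ((f x)%:E + g x - Fstar%:E)) <= (2^-1)%:E * D2 f g x L2)%E)).
Proof.
move=> _ [g_noo _] g_cvx _ L1_gt0 L2_gt0 L2n_le L12.
have half_ge0 : (0 <= (2^-1 : R)%:E)%E by rewrite lee_fin.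
have g_fin x : dom g x -> exists gx, g x = gx%:E.
  by move=> x_dom; exists (fine (g x)); rewrite fineK // fin_numE g_noo (lt_eqF x_dom).
split=> [mu2 mu2_gt0 PL2 | mu1 mu1_gt0 PL1] x x_dom; have [gx gxE] := g_fin x x_dom.
- (* mu2/n (F x - Fstar) <= D_2(x, L2)/2n <= D_1(x, L2/n)/2 <= D_1(x, L1)/2 *)
  rewrite [mu2 / _]mulrC EFinM -muleA.
  apply: le_trans (lee_wpmul2l _ (PL2 x x_dom)) _; first by rewrite lee_fin invr_ge0.
  rewrite muleCA; apply: lee_wpmul2l => //; apply: le_trans (D2_le_D1 L2_gt0) _.
  apply: (Dp_mono gxE (@norm1_pos_homogeneous R n) g_cvx g_noo _ L2n_le).
  by rewrite divr_ge0 // ltW.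
- (* mu1 (F x - Fstar) <= D_1(x, L1)/2 <= D_2(x, L1)/2 <= D_2(x, L2)/2 *)
  apply: le_trans (PL1 x x_dom) _; apply: lee_wpmul2l => //.
  apply: le_trans (D1_le_D2 L1_gt0) _.
  exact: (Dp_mono gxE (@norm2_pos_homogeneous R n) g_cvx g_noo (ltW L1_gt0) L12).
Qed.
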